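(* Let $G$ be a graph on $n\ge 1$ vertices and let $s\ge 1$ be an integer. (1) For $x>\lambda(G)$ put $\beta_G(x)=\frac{s}{x}\chi_G(x)$. Then $\beta_G$ is strictly decreasing on $(\lambda(G),\infty)$, and $\lambda(\overline{K}_s\vee G)$ is the unique $x>\lambda(G)$ satisfying $\beta_G(x)=1$. (2) We have \[ \lambda(\overline{K}_s\vee G)\le \frac{\lambda(G)+\sqrt{\lambda(G)^2+4ns}}{2}, \] with equality if $G$ is regular.
   Context: $\lambda(\cdot)$ is the spectral radius of the adjacency matrix $A(\cdot)$. For $x>\lambda(G)$, the coronal of $G$ is $\chi_G(x)=\mathbf{1}^{\mathrm T}(xI-A(G))^{-1}\mathbf{1}$, the sum of all entries of $(xI-A(G))^{-1}$. $\overline{K}_s$ is the edgeless graph on $s$ vertices and $\vee$ denotes the join (disjoint union plus all edges between the two graphs). *)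

From HB Require Import structures.
From mathcomp Require Import all_boot all_order all_algebra.
From mathcomp Require Import classical_sets reals.
Set Implicit Arguments. Unset Strict Implicit. Unset Printing Implicit Defensive.
Import Order.TTheory GRing.Theory Num.Theory.
Local Open Scope ring_scope.
Local Open Scope classical_set_scope.

Definition simple_graph (n : nat) (e : rel 'I_n) : Prop :=
  symmetric e /\ irreflexive e.

Definition adjmx (R : realType) (n : nat) (e : rel 'I_n) : 'M[R]_n :=
  \matrix_(i, j) (e i j)%:R.

(* Spectral radius: max |mu| over the eigenvalues mu of A.  For a real
   symmetric matrix (such as an adjacency matrix) all eigenvalues are real,
   so we range over the real eigenvalues. *)
Definition specrad (R : realType) (n : nat) (A : 'M[R]_n) : R :=
  sup [set `|mu| | mu in [set mu : R | eigenvalue A mu]].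

(* Coronal chi_G(x) = 1^T (xI - A(G))^{-1} 1 (meaningful for x > lambda(G)). *)
Definition coronal (R : realType) (n : nat) (e : rel 'I_n) (x : R) : R :=
  \sum_(i < n) \sum_(j < n) (invmx (x%:M - adjmx R e)) i j.

(* Join  \bar K_s \vee G : vertices 'I_(s + n); the first s vertices form the
   edgeless graph \bar K_s, the last n form G, and every vertex of the first
   part is adjacent to every vertex of the second. *)
Definition join_empty (s n : nat) (e : rel 'I_n) : rel 'I_(s + n) :=
  fun u v =>
    match split u, split v with
    | inl _, inl _ => false
    | inl _, inr _ => true
    | inr _, inl _ => true
    | inr i, inr j => e i j
    end.

Definition regular (n : nat) (e : rel 'I_n) : Prop :=
  exists k : nat, forall i : 'I_n, #|[pred j | e i j]| = k.
Arguments coronal R {n} e x.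
Arguments adjmx R {n} e.
Arguments join_empty s {n} e.

(* Diagonalising the symmetric matrix A = A(G) (through its complexification)
   gives, for x > lambda(G), chi_G(x) = sum_k c_k / (x - mu_k) with eigenvalues
   mu_k <= lambda(G) and weights c_k >= 0 summing to n.  Hence
   beta_G(x) = sum_k s c_k / (x (x - mu_k)) is strictly decreasing and at most
   s n / (x (x - lambda(G))).  A Perron eigenvector (a, w) of the join satisfies
   lambda_J a_i = sum w and w (lambda_J - A) = (sum a) 1; eliminating a gives
   beta_G(lambda_J) = 1, while a Rayleigh quotient with the test vector
   (t 1, |p|), p a Perron vector of A, shows lambda_J > lambda(G).  Then
   1 = beta_G(lambda_J) <= s n / (lambda_J (lambda_J - lambda(G))) is the
   quadratic inequality (2).  If G is k-regular then 1 is an eigenvector,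
   lambda(G) = k and chi_G(x) = n / (x - k), so the inequality is an equality. *)

From HB Require Import structures.
From mathcomp Require Import all_boot all_order all_algebra.
From mathcomp Require Import classical_sets reals complex.
From mathcomp Require Import ring lra.
Import Order.TTheory GRing.Theory Num.Theory.
Local Open Scope ring_scope.
Set Implicit Arguments. Unset Strict Implicit.

Section QuadraticForms.
Variable R : realFieldType.

Definition qform m (A : 'M[R]_m) (u : 'rV_m) : R := (u *m A *m u^T) 0 0.
Definition sqnorm m (u : 'rV[R]_m) : R := (u *m u^T) 0 0.

Lemma qformE m (A : 'M[R]_m) u :
  qform A u = \sum_i \sum_j u 0 i * A i j * u 0 j.
Proof.
rewrite /qform mxE exchange_big /=; apply: eq_bigr => i _.
by rewrite mxE big_distrl /=; apply: eq_bigr => j _; rewrite !mxE.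
Qed.

Lemma sqnormE m (u : 'rV[R]_m) : sqnorm u = \sum_i u 0 i ^+ 2.
Proof. by rewrite /sqnorm mxE; apply: eq_bigr => i _; rewrite mxE expr2. Qed.

Lemma sqnorm_ge0 m (u : 'rV[R]_m) : 0 <= sqnorm u.
Proof. by rewrite sqnormE sumr_ge0 // => i _; rewrite sqr_ge0. Qed.

Lemma sqnorm_gt0 m (u : 'rV[R]_m) : u != 0 -> 0 < sqnorm u.
Proof.
case/rV0Pn => j uj0; rewrite sqnormE (bigD1 j) //= ltr_pwDl ?sumr_ge0 //.
  by rewrite lt_def sqrf_eq0 uj0 sqr_ge0.
by move=> i _; rewrite sqr_ge0.
Qed.

Lemma sqnorm_abs m (u : 'rV[R]_m) : sqnorm (map_mx Num.norm u) = sqnorm u.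
Proof.
by rewrite !sqnormE; apply: eq_bigr => i _; rewrite mxE real_normK ?num_real.
Qed.

Lemma sqnorm_row_mx m1 m2 (a : 'rV[R]_m1) (b : 'rV[R]_m2) :
  sqnorm (row_mx a b) = sqnorm a + sqnorm b.
Proof. by rewrite /sqnorm tr_row_mx mul_row_col mxE. Qed.

Lemma sqnorm_const_mx m (a : R) : sqnorm (const_mx a : 'rV_m) = m%:R * a ^+ 2.
Proof.
rewrite sqnormE (eq_bigr (fun=> a ^+ 2)) => [|i _]; last by rewrite mxE.
by rewrite sumr_const card_ord mulr_natl.
Qed.

Lemma mulmx_tr_const1 m (u : 'rV[R]_m) :
  (u *m (const_mx 1 : 'rV_m)^T) 0 0 = \sum_j u 0 j.
Proof. by rewrite mxE; apply: eq_bigr => j _; rewrite !mxE mulr1. Qed.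

Lemma mulmx_const1_trmx m1 m2 (u : 'rV[R]_m1) (v : 'rV[R]_m2) :
  (u *m const_mx 1 *m v^T) 0 0 = (\sum_i u 0 i) * (\sum_j v 0 j).
Proof.
rewrite mxE mulr_sumr; apply: eq_bigr => j _; rewrite !mxE; congr (_ * _).
by apply: eq_bigr => i _; rewrite mxE mulr1.
Qed.

Lemma const1_neq0 m : (0 < m)%N -> const_mx 1 != 0 :> 'rV[R]_m.
Proof. by move=> m_gt0; apply/rV0Pn; exists (Ordinal m_gt0); rewrite mxE oner_eq0. Qed.

Lemma const1_mulmx_colsum m (A : 'M[R]_m) K : (forall j, \sum_i A i j = K) ->
  (const_mx 1 : 'rV_m) *m A = K *: const_mx 1.
Proof.
move=> colA; apply/rowP => j; rewrite !mxE mulr1 -(colA j).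
by apply: eq_bigr => i _; rewrite mxE mul1r.
Qed.

Lemma qform1 m (u : 'rV[R]_m) : qform 1%:M u = sqnorm u.
Proof. by rewrite /qform mulmx1. Qed.

Lemma qform_eigenvector m (A : 'M[R]_m) u mu :
  u *m A = mu *: u -> qform A u = mu * sqnorm u.
Proof. by move=> uA; rewrite /qform uA -scalemxAl mxE. Qed.

Lemma norm_qform_le m (A : 'M[R]_m) u : (forall i j, 0 <= A i j) ->
  `|qform A u| <= qform A (map_mx Num.norm u).
Proof.
move=> A_ge0; rewrite !qformE.
apply: le_trans (ler_norm_sum _ _ _) _; apply: ler_sum => i _.
apply: le_trans (ler_norm_sum _ _ _) _; apply: ler_sum => j _.
by rewrite !normrM (ger0_norm (A_ge0 i j)) !mxE.
Qed.

Lemma eigenvector_abs_rayleigh m (A : 'M[R]_m) v mu :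
  (forall i j, 0 <= A i j) -> v *m A = mu *: v ->
  `|mu| * sqnorm v <= qform A (map_mx Num.norm v).
Proof.
move=> A_ge0 vA; rewrite -(ger0_norm (sqnorm_ge0 v)) -normrM -(qform_eigenvector vA).
exact: norm_qform_le.
Qed.

Lemma norm_eigenvalue_le_colsum m (A : 'M[R]_m) (v : 'rV_m) mu K :
  (forall i j, 0 <= A i j) -> (forall j, \sum_i A i j = K) ->
  v *m A = mu *: v -> v != 0 -> `|mu| <= K.
Proof.
move=> A_ge0 colA vA /rV0Pn [j0 vj0_nz].
have [j _ vj_max] := @arg_maxP _ _ _ j0 xpredT (fun j => `|v 0 j|) isT.
have vj_gt0 : 0 < `|v 0 j| by apply: lt_le_trans (vj_max j0 isT); rewrite normr_gt0.
rewrite -(ler_pM2r vj_gt0) -normrM.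
have -> : mu * v 0 j = \sum_i v 0 i * A i j.
  by have := congr1 (fun w : 'rV_m => w 0 j) vA; rewrite !mxE => <-.
rewrite -(colA j) mulr_suml; apply: le_trans (ler_norm_sum _ _ _) _.
apply: ler_sum => i _.
rewrite normrM (ger0_norm (A_ge0 i j)) mulrC.
by apply: ler_wpM2l; [exact: A_ge0 | exact: vj_max].
Qed.

Lemma qform_resolvent_eigenvector m (A : 'M[R]_m) u mu x :
  u *m A = mu *: u -> x != mu -> x%:M - A \in unitmx ->
  qform (invmx (x%:M - A)) u = sqnorm u / (x - mu).
Proof.
move=> uA x_neq_mu xA_unit.
have x_mu_nz : x - mu != 0 by rewrite subr_eq0.
have uxA : ((x - mu)^-1 *: u) *m (x%:M - A) = u.
  by rewrite -scalemxAl mulmxBr mul_mx_scalar uA -scalerBl scalerA mulVf ?scale1r.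
by rewrite /qform -[in u *m _]uxA mulmxK // -scalemxAl mxE mulrC.
Qed.

End QuadraticForms.

Section RealSymmetricSpectral.
Variable R : rcfType.
Local Notation C := R[i].
Local Notation toC := (real_complex R).
Local Open Scope sesquilinear_scope.

(* [c u k] stands for the squared length of the component of [u] along the
   k-th vector of an orthonormal eigenbasis.  Only these weights are exposed,
   so a unitary diagonalisation over [R[i]] serves as well as an orthogonal
   one over [R]. *)
Record spectral_resolution m (A : 'M[R]_m) (d : 'I_m -> R)
    (c : 'rV[R]_m -> 'I_m -> R) : Prop := SpectralResolution {
  eigenvalue_resolution : forall k, eigenvalue A (d k);
  resolution_weight_ge0 : forall u k, 0 <= c u k;
  sqnorm_resolution : forall u, sqnorm u = \sum_k c u k;
  qform_resolution : forall u, qform A u = \sum_k d k * c u k;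
  unitmx_resolution : forall x, (forall k, x != d k) -> x%:M - A \in unitmx;
  resolvent_resolution : forall x, (forall k, x != d k) ->
    forall u, qform (invmx (x%:M - A)) u = \sum_k c u k / (x - d k) }.

Let toC_real (r : R) : toC r \is Num.real.
Proof. by apply/complex_realP; exists r. Qed.

Let cform m (M : 'M[C]_m) (u : 'rV[R]_m) :=
  (map_mx toC u *m M *m (map_mx toC u)^t*) 0 0.

Let qform_complex m (B : 'M[R]_m) u : toC (qform B u) = cform (map_mx toC B) u.
Proof.
rewrite /cform; have -> : (map_mx toC u)^t* = map_mx toC u^T.
  by apply/matrixP => i j; rewrite !mxE (conj_Creal (toC_real _)).
by rewrite /qform -!map_mxM [RHS]mxE.
Qed.

Variables (m : nat) (A : 'M[R]_m).
Hypothesis symA : A^T = A.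

Let P := spectralmx (map_mx toC A).
Let D := spectral_diag (map_mx toC A).
Let y (u : 'rV[R]_m) := map_mx toC u *m P^t*.
Let d k := complex.Re (D 0 k).
Let c u k := complex.Re (`|y u 0 k| ^+ 2).

Let PPt : P *m P^t* = 1%:M.
Proof. exact/unitarymxP/spectral_unitarymx. Qed.

Let PtP : P^t* *m P = 1%:M.
Proof. by rewrite -invmx_unitary ?mulVmx ?spectral_unit ?spectral_unitarymx. Qed.

Let hermA : map_mx toC A \is hermsymmx.
Proof.
apply/is_hermitianmxP; rewrite expr0 scale1r; apply/matrixP => i j.
by rewrite !mxE (conj_Creal (toC_real _)) -[in RHS]symA mxE.
Qed.

Let AE : map_mx toC A = P^t* *m diag_mx D *m P.
Proof.
have /orthomx_spectralP := hermitian_normalmx hermA.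
by rewrite invmx_unitary ?spectral_unitarymx.
Qed.

Let toC_d k : toC (d k) = D 0 k.
Proof. exact/RRe_real/(mxOverP (hermitian_spectral_diag_real hermA)). Qed.

Let toC_c u k : toC (c u k) = `|y u 0 k| ^+ 2.
Proof. exact/RRe_real/realX/normr_real. Qed.

Let cform_diag E u :
  cform (P^t* *m diag_mx E *m P) u = \sum_k E 0 k * toC (c u k).
Proof.
rewrite /cform !mulmxA -[_ *m P *m _]mulmxA.
have -> : P *m (map_mx toC u)^t* = (y u)^t* by rewrite trmx_mul map_mxM trmxCK.
rewrite mxE; apply: eq_bigr => k _.
by rewrite toC_c normCK mul_mx_diag !mxE mulrAC mulrC.
Qed.

Let diag_conj_mul a b :
  (P^t* *m diag_mx a *m P) *m (P^t* *m diag_mx b *m P)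
  = P^t* *m diag_mx (\row_k (a 0 k * b 0 k)) *m P.
Proof. by rewrite !mulmxA -(mulmxA _ P) PPt mulmx1 -(mulmxA (P^t*)) mulmx_diag. Qed.

Let shift_conj_diag x :
  map_mx toC (x%:M - A) = P^t* *m diag_mx (\row_k (toC x - D 0 k)) *m P.
Proof.
have -> : diag_mx (\row_k (toC x - D 0 k)) = (toC x)%:M - diag_mx D.
  apply/matrixP => i j; rewrite !mxE.
  by case: eqP => [->|]; rewrite ?mulr1n ?mulr0n ?subr0.
rewrite mulmxBr mulmxBl mul_mx_scalar -scalemxAl PtP -AE scalemx1.
by rewrite map_mxB map_scalar_mx.
Qed.

Lemma sym_spectral_resolution : exists d c, spectral_resolution A d c.
Proof.
exists d, c.
have resolventE x : (forall k, x != d k) ->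
    map_mx toC (x%:M - A) *m (P^t* *m diag_mx (\row_k (toC x - D 0 k)^-1) *m P) = 1%:M.
  move=> xd; rewrite shift_conj_diag diag_conj_mul.
  have -> : \row_k ((\row_k (toC x - D 0 k)) 0 k * (\row_k (toC x - D 0 k)^-1) 0 k)
      = const_mx 1.
    apply/rowP => k; rewrite !mxE mulfV // subr_eq0 -toC_d.
    by apply: contra (xd k) => /eqP/complexI ->.
  by rewrite diag_const_mx mulmx1 PtP.
split.
- move=> k; suff : eigenvalue (map_mx toC A) (D 0 k) by rewrite -toC_d eigenvalue_map.
  apply/eigenvalueP; exists (delta_mx 0 k *m P).
    rewrite AE !mulmxA -(mulmxA _ P) PPt mulmx1 scalemxAl; congr (_ *m _).
    apply/matrixP => i j; rewrite mul_mx_diag !mxE.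
    by case: (j =P k) => [->|_]; [rewrite mulrC | rewrite andbF mulr0 mul0r].
  apply/eqP => /(congr1 (fun M => M *m P^t*)).
  rewrite -mulmxA PPt mulmx1 mul0mx => /matrixP/(_ 0 k).
  by rewrite !mxE !eqxx => /eqP; rewrite oner_eq0.
- by move=> u k; rewrite -ler0c toC_c exprn_ge0.
- move=> u; apply: complexI; rewrite -qform1 qform_complex map_mx1 rmorph_sum.
  rewrite -PtP -[P^t*]mulmx1 -diag_const_mx cform_diag.
  by apply: eq_bigr => k _; rewrite mxE mul1r.
- move=> u; apply: complexI; rewrite qform_complex AE cform_diag rmorph_sum.
  by apply: eq_bigr => k _; rewrite -toC_d rmorphM.
- by move=> x /resolventE /mulmx1_unit [+ _]; rewrite map_unitmx.
move=> x /resolventE xAE u; apply: complexI.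
have xA_unit : map_mx toC (x%:M - A) \in unitmx by case: (mulmx1_unit xAE).
rewrite qform_complex map_invmx -[invmx _]mulmx1 -xAE mulKmx // cform_diag rmorph_sum.
by apply: eq_bigr => k _; rewrite mxE -toC_d mulrC fmorph_div [_ (x - _)]rmorphB.
Qed.

End RealSymmetricSpectral.

Lemma eigenvalue_unitmx (F : fieldType) m (A : 'M[F]_m) a :
  eigenvalue A a = (a%:M - A \notin unitmx).
Proof.
rewrite unitmxE unitfE negbK.
apply/eigenvalueP/det0P => [[v vA v_nz] | [v v_nz vA]]; exists v => //.
  by rewrite mulmxBr vA mul_mx_scalar subrr.
by apply/eqP; rewrite -mul_mx_scalar eq_sym -subr_eq0 -mulmxBr vA.
Qed.

Section SpectralRadius.
Variable R : realType.
Variables (m : nat) (A : 'M[R]_m) (d : 'I_m -> R) (c : 'rV[R]_m -> 'I_m -> R).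
Hypothesis Ares : spectral_resolution A d c.

Lemma eigenvalue_resolutionP mu : eigenvalue A mu -> exists k, mu = d k.
Proof.
rewrite eigenvalue_unitmx => /negP mu_eig.
have [/existsP [k /eqP ->]|/existsPn mu_d] := boolP [exists k, mu == d k].
  by exists k.
by case: mu_eig; apply: (unitmx_resolution Ares).
Qed.

Lemma norm_eigenvalue_le_specrad mu : eigenvalue A mu -> `|mu| <= specrad A.
Proof.
move=> mu_eig; apply: sup_upper_bound; last by exists mu.
split; first by exists `|mu|, mu.
exists (\sum_k `|d k|) => _ [nu /eigenvalue_resolutionP [k ->] <-].
by rewrite (bigD1 k) //= lerDl sumr_ge0.
Qed.

Lemma specrad_resolution : (0 < m)%N -> exists k, specrad A = `|d k|.
Proof.
move=> m_gt0.
have [k _ dk_max] := @arg_maxP _ _ _ (Ordinal m_gt0) xpredT (fun k => `|d k|) isT.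
exists k; apply/eqP; rewrite eq_le norm_eigenvalue_le_specrad ?andbT.
  apply: ge_sup => [|_ [_ /eigenvalue_resolutionP [k' ->] <-]]; last exact: dk_max.
  by exists `|d k|, (d k); first exact: (eigenvalue_resolution Ares).
exact: (eigenvalue_resolution Ares).
Qed.

Lemma resolution_le_specrad k : d k <= specrad A.
Proof.
apply: le_trans (real_ler_norm (num_real _)) _.
exact/norm_eigenvalue_le_specrad/(eigenvalue_resolution Ares).
Qed.

Lemma resolution_weight_gt0 u : u != 0 -> exists k, 0 < c u k.
Proof.
move=> u_nz; have [k /andP [_ ck_gt0]] : exists k, true && (0 < c u k).
  apply: psumr_neq0P => [k _|]; first exact: (resolution_weight_ge0 Ares).
  by rewrite -(sqnorm_resolution Ares) => /eqP; rewrite gt_eqF ?sqnorm_gt0.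
by exists k.
Qed.

Lemma eigenvalue_of_rayleigh_ge L w : (forall k, d k <= L) -> w != 0 ->
  L * sqnorm w <= qform A w -> eigenvalue A L.
Proof.
move=> d_le_L w_nz rayleigh.
have gap_ge0 k : 0 <= (L - d k) * c w k.
  by rewrite mulr_ge0 ?subr_ge0 ?(resolution_weight_ge0 Ares).
have gap0 : \sum_k (L - d k) * c w k = 0.
  apply/eqP; rewrite eq_le (sumr_ge0 _ (fun k _ => gap_ge0 k)) andbT.
  under eq_bigr do rewrite mulrBl.
  rewrite sumrB -mulr_sumr -(sqnorm_resolution Ares) -(qform_resolution Ares).
  by rewrite subr_le0.
have [k ck_gt0] := resolution_weight_gt0 w_nz.
have /eqP := @psumr_eq0P _ _ _ _ (fun k _ => gap_ge0 k) gap0 k isT.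
rewrite mulf_eq0 (gt_eqF ck_gt0) orbF subr_eq0 => /eqP ->.
exact: (eigenvalue_resolution Ares).
Qed.

End SpectralRadius.

Section NonnegativeSymmetric.
Variable R : realType.
Variables (m : nat) (A : 'M[R]_m).
Hypotheses (symA : A^T = A) (A_ge0 : forall i j, 0 <= A i j) (m_gt0 : (0 < m)%N).

Lemma specrad_ge0 : 0 <= specrad A.
Proof.
have [d [c Ares]] := sym_spectral_resolution symA.
by have [k ->] := specrad_resolution Ares m_gt0.
Qed.

Lemma qform_le_specrad u : qform A u <= specrad A * sqnorm u.
Proof.
have [d [c Ares]] := sym_spectral_resolution symA.
rewrite (qform_resolution Ares) (sqnorm_resolution Ares) mulr_sumr.
apply: ler_sum => k _; apply: ler_wpM2r.
  exact: (resolution_weight_ge0 Ares).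
exact: (resolution_le_specrad Ares).
Qed.

Lemma specrad_lt_unitmx x : specrad A < x -> x%:M - A \in unitmx.
Proof.
have [d [c Ares]] := sym_spectral_resolution symA.
move=> lt_x; apply: contraLR lt_x; rewrite -eigenvalue_unitmx -leNgt => x_eig.
exact: le_trans (real_ler_norm (num_real _)) (norm_eigenvalue_le_specrad Ares x_eig).
Qed.

Lemma specrad_eigenvalue : eigenvalue A (specrad A).
Proof.
have [d [c Ares]] := sym_spectral_resolution symA.
have [k specradE] := specrad_resolution Ares m_gt0.
have /eigenvalueP [v vA v_nz] := eigenvalue_resolution Ares k.
apply: (eigenvalue_of_rayleigh_ge Ares (w := map_mx Num.norm v)).
- exact: (resolution_le_specrad Ares).
- apply: contra v_nz => /eqP/matrixP v0; apply/eqP/matrixP => i j.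
  by have := v0 i j; rewrite !mxE => /normr0_eq0.
- by rewrite sqnorm_abs specradE; apply: eigenvector_abs_rayleigh.
Qed.

Lemma specrad_const_colsum K : (forall j, \sum_i A i j = K) -> specrad A = K.
Proof.
move=> colA; have [d [c Ares]] := sym_spectral_resolution symA.
have K_ge0 : 0 <= K by rewrite -(colA (Ordinal m_gt0)) sumr_ge0.
have K_eig : eigenvalue A K.
  apply/eigenvalueP; exists (const_mx 1); first exact: const1_mulmx_colsum.
  exact: const1_neq0.
apply/eqP; rewrite eq_le -{2}(ger0_norm K_ge0).
rewrite (norm_eigenvalue_le_specrad Ares K_eig) andbT.
have /eigenvalueP [v vA v_nz] := specrad_eigenvalue.
apply: le_trans (real_ler_norm (num_real _)) _.
exact: norm_eigenvalue_le_colsum A_ge0 colA vA v_nz.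
Qed.

End NonnegativeSymmetric.

Section AdjacencyMatrices.
Variable R : realType.

Lemma adjmx_ge0 n (e : rel 'I_n) i j : 0 <= adjmx R e i j.
Proof. by rewrite mxE ler0n. Qed.

Lemma tr_adjmx n (e : rel 'I_n) : symmetric e -> (adjmx R e)^T = adjmx R e.
Proof. by move=> e_sym; apply/matrixP => i j; rewrite !mxE e_sym. Qed.

Lemma colsum_adjmx n (e : rel 'I_n) k : symmetric e ->
  (forall i, #|[pred j | e i j]| = k) -> forall j, \sum_i adjmx R e i j = k%:R.
Proof.
move=> e_sym deg_k j; rewrite -(deg_k j) -sum1_card natr_sum [RHS]big_mkcond /=.
by apply: eq_bigr => i _; rewrite mxE e_sym inE; case: (e j i).
Qed.

Lemma coronalE n (e : rel 'I_n) x :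
  coronal R e x = qform (invmx (x%:M - adjmx R e)) (const_mx 1).
Proof.
rewrite qformE; apply: eq_bigr => i _; apply: eq_bigr => j _.
by rewrite !mxE mul1r mulr1.
Qed.

Lemma join_empty_sym s n (e : rel 'I_n) : symmetric e -> symmetric (join_empty s e).
Proof.
by move=> e_sym u v; rewrite /join_empty; case: (split u) => a; case: (split v).
Qed.

Lemma adjmx_join_empty s n (e : rel 'I_n) :
  adjmx R (join_empty s e) = block_mx 0 (const_mx 1) (const_mx 1) (adjmx R e).
Proof.
apply/matrixP => i j; rewrite mxE /join_empty.
case: split_ordP => i' ->; case: split_ordP => j' ->.
- by rewrite block_mxEul mxE.
- by rewrite block_mxEur mxE.
- by rewrite block_mxEdl mxE.
- by rewrite block_mxEdr mxE.
Qed.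

Lemma qform_join_empty s n (e : rel 'I_n) (a : 'rV[R]_s) (q : 'rV[R]_n) :
  qform (adjmx R (join_empty s e)) (row_mx a q)
  = 2%:R * ((\sum_i a 0 i) * (\sum_j q 0 j)) + qform (adjmx R e) q.
Proof.
rewrite /qform adjmx_join_empty tr_row_mx mul_row_block !mulmx0 !add0r.
rewrite mul_row_col mulmxDl.
have entryD (X Y : 'M[R]_1) : (X + Y) 0 0 = X 0 0 + Y 0 0 by rewrite mxE.
by rewrite !entryD !mulmx_const1_trmx -/(qform _ _); ring.
Qed.

Lemma join_empty_eigenvector s n (e : rel 'I_n) (a : 'rV[R]_s) (w : 'rV[R]_n) mu :
  row_mx a w *m adjmx R (join_empty s e) = mu *: row_mx a w ->
  (forall i, mu * a 0 i = \sum_j w 0 j) /\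
  w *m (mu%:M - adjmx R e) = (\sum_i a 0 i) *: const_mx 1.
Proof.
rewrite adjmx_join_empty mul_row_block !mulmx0 !add0r scale_row_mx.
case/eq_row_mx => aE wE.
split=> [i|].
  have := congr1 (fun M : 'rV[R]_s => M 0 i) aE; rewrite !mxE => <-.
  by apply: eq_bigr => j _; rewrite mxE mulr1.
rewrite mulmxBr mul_mx_scalar -wE addrK; apply/rowP => j; rewrite !mxE mulr1.
by apply: eq_bigr => i _; rewrite mxE mulr1.
Qed.

End AdjacencyMatrices.

Section QuadraticRoot.
Variable R : rcfType.

Lemma le_quadratic_root (a x N : R) :
  x * (x - a) <= N -> x <= (a + Num.sqrt (a ^+ 2 + 4%:R * N)) / 2%:R.
Proof.
move=> xN; rewrite ler_pdivlMr // -lerBlDl.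
have sq_le : (x * 2%:R - a) ^+ 2 <= a ^+ 2 + 4%:R * N by nra.
apply: le_trans (ler_norm _) _; rewrite -sqrtr_sqr.
exact: ler_wsqrtr.
Qed.

Lemma eq_quadratic_root (a x N : R) : a <= 2%:R * x ->
  x * (x - a) = N -> x = (a + Num.sqrt (a ^+ 2 + 4%:R * N)) / 2%:R.
Proof.
move=> ax <-.
have -> : a ^+ 2 + 4%:R * (x * (x - a)) = (2%:R * x - a) ^+ 2 by ring.
by rewrite sqrtr_sqr ger0_norm ?subr_ge0 //; field.
Qed.

End QuadraticRoot.

Lemma lt_inv_mul_subr (R : realFieldType) (a x y : R) : a < x -> 0 < x -> x < y ->
  (y * (y - a))^-1 < (x * (x - a))^-1.
Proof.
move=> a_x x_gt0 x_y.
have xa_gt0 : 0 < x * (x - a) by rewrite mulr_gt0 ?subr_gt0.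
by rewrite ltf_pV2 ?posrE //; [nra | rewrite mulr_gt0 ?subr_gt0 //; lra].
Qed.

Section JoinSpectralRadius.
Variables (R : realType) (n s : nat) (e : rel 'I_n).
Hypotheses (e_sym : symmetric e) (n_gt0 : (0 < n)%N) (s_gt0 : (0 < s)%N).
Local Notation A := (adjmx R e).
Local Notation B := (adjmx R (join_empty s e)).
Local Notation lam := (specrad A).
Local Notation lamJ := (specrad B).
Local Notation beta x := (s%:R / x * coronal R e x).

Let A_sym : A^T = A := tr_adjmx R e_sym.
Let B_sym : B^T = B := tr_adjmx R (@join_empty_sym s _ _ e_sym).
Let sn_gt0 : (0 < s + n)%N := ltn_addl s n_gt0.
Let lam_ge0 : 0 <= lam := specrad_ge0 A_sym n_gt0.

Lemma specrad_lt_join : lam < lamJ.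
Proof.
have /eigenvalueP [p pA p_nz] := specrad_eigenvalue A_sym (@adjmx_ge0 R n e) n_gt0.
set q := map_mx Num.norm p.
have q_ge0 i : 0 <= q 0 i by rewrite mxE.
have rayleighA : lam * sqnorm q <= qform A q.
  rewrite sqnorm_abs -{1}(ger0_norm lam_ge0).
  by apply: eigenvector_abs_rayleigh pA => i j; apply: adjmx_ge0.
have sum_q_gt0 : 0 < \sum_i q 0 i.
  have [i pi_nz] := rV0Pn _ p_nz.
  by rewrite (bigD1 i) //= ltr_pwDl ?sumr_ge0 // mxE normr_gt0.
(* Any [0 < t] with [lam * t < 2 * \sum_i q 0 i] would do; this one avoids
   dividing by [lam]. *)
pose t := (\sum_i q 0 i) / (lam + 1).
have t_gt0 : 0 < t by rewrite divr_gt0 // ltr_pwDr.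
have sum_qE : \sum_i q 0 i = t * (lam + 1) by rewrite divfK // gt_eqF // ltr_pwDr.
have := qform_le_specrad B_sym (row_mx (const_mx t) q).
rewrite qform_join_empty sqnorm_row_mx sqnorm_const_mx.
rewrite (eq_bigr (fun=> t)) => [|i _]; last by rewrite mxE.
rewrite sumr_const card_ord -[t *+ s]mulr_natl sum_qE => rayleighB.
have st2_gt0 : 0 < s%:R * t ^+ 2 by rewrite mulr_gt0 ?ltr0n ?exprn_gt0.
have sq_ge0 := sqnorm_ge0 q.
have norm_gt0 : 0 < s%:R * t ^+ 2 + sqnorm q by lra.
rewrite -(ltr_pM2r norm_gt0).
nra.
Qed.

Let lamJ_gt0 : 0 < lamJ := le_lt_trans lam_ge0 specrad_lt_join.

Lemma beta_specrad_join : beta lamJ = 1.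
Proof.
have /eigenvalueP [v vB v_nz] := specrad_eigenvalue B_sym (@adjmx_ge0 R _ _) sn_gt0.
rewrite -[v]hsubmxK in vB v_nz.
have [aE wE] := join_empty_eigenvector vB.
set a := lsubmx v in aE wE v_nz; set w := rsubmx v in aE wE v_nz.
set sw := \sum_j w 0 j in aE.
have a_const i : a 0 i = sw / lamJ by rewrite -(aE i) mulrC mulKf ?gt_eqF.
have sum_a : \sum_i a 0 i = s%:R * (sw / lamJ).
  by rewrite (eq_bigr _ (fun i _ => a_const i)) sumr_const card_ord mulr_natl.
have xA_unit := specrad_lt_unitmx A_sym specrad_lt_join.
have wE' : w = (\sum_i a 0 i) *: const_mx 1 *m invmx (lamJ%:M - A).
  by rewrite -wE mulmxK.
have sw_E : sw = (\sum_i a 0 i) * coronal R e lamJ.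
  by rewrite /sw -mulmx_tr_const1 wE' -!scalemxAl mxE coronalE.
have sw_nz : sw != 0.
  apply: contraNneq v_nz => sw0.
  have a0 : a = 0 by apply/rowP => i; rewrite a_const sw0 mul0r mxE.
  by rewrite a0 wE' sum_a sw0 mul0r mulr0 scale0r mul0mx row_mx0.
apply: (mulfI sw_nz); rewrite mulr1 {2}sw_E sum_a.
by field; rewrite gt_eqF.
Qed.

Lemma beta_resolution d c : spectral_resolution A d c -> forall x, lam < x ->
  beta x = \sum_k s%:R * c (const_mx 1) k / (x * (x - d k)).
Proof.
move=> Ares x lam_x.
rewrite coronalE (resolvent_resolution Ares) => [|k]; last first.
  by rewrite gt_eqF // (le_lt_trans (resolution_le_specrad Ares k)).
by rewrite mulr_sumr; apply: eq_bigr => k _; rewrite mulf_div.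
Qed.

Lemma beta_decreasing x y : lam < x -> x < y -> beta y < beta x.
Proof.
have [d [c Ares]] := sym_spectral_resolution A_sym.
move=> lam_x x_y; have lam_y := lt_trans lam_x x_y.
have x_gt0 : 0 < x := le_lt_trans lam_ge0 lam_x.
have d_x k : d k < x := le_lt_trans (resolution_le_specrad Ares k) lam_x.
have sc_ge0 k : 0 <= s%:R * c (const_mx 1) k.
  by rewrite mulr_ge0 ?(resolution_weight_ge0 Ares).
have [k ck_gt0] := resolution_weight_gt0 Ares (const1_neq0 R n_gt0).
rewrite !(beta_resolution Ares) // (bigD1 k) //= [X in _ < X](bigD1 k) //=.
apply: ltr_leD.
  by rewrite ltr_pM2l ?lt_inv_mul_subr // mulr_gt0 ?ltr0n.
apply: ler_sum => j _; rewrite ler_wpM2l //.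
exact/ltW/lt_inv_mul_subr.
Qed.

Lemma specrad_join_bound : lamJ * (lamJ - lam) <= n%:R * s%:R.
Proof.
have [d [c Ares]] := sym_spectral_resolution A_sym.
have gap_gt0 : 0 < lamJ - lam by rewrite subr_gt0 specrad_lt_join.
have nE : n%:R = \sum_k c (const_mx 1) k.
  by rewrite -(sqnorm_resolution Ares) sqnorm_const_mx expr1n mulr1.
suff : 1 <= n%:R * s%:R / (lamJ * (lamJ - lam)) by rewrite ler_pdivlMr ?mul1r ?mulr_gt0.
rewrite -{1}beta_specrad_join (beta_resolution Ares specrad_lt_join) nE !mulr_suml.
apply: ler_sum => k _; rewrite [_ * s%:R]mulrC.
rewrite ler_wpM2l ?mulr_ge0 ?(resolution_weight_ge0 Ares) //.
rewrite lef_pV2 ?posrE ?mulr_gt0 //.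
- by rewrite ler_wpM2l ?(ltW lamJ_gt0) // lerB // (resolution_le_specrad Ares).
- by rewrite subr_gt0 (le_lt_trans (resolution_le_specrad Ares k) specrad_lt_join).
Qed.

Lemma specrad_join_regular : regular e -> lamJ * (lamJ - lam) = n%:R * s%:R.
Proof.
case=> k deg_k; have colA := colsum_adjmx R e_sym deg_k.
have lamE : lam = k%:R := specrad_const_colsum A_sym (@adjmx_ge0 R _ e) n_gt0 colA.
have gap_nz : lamJ - lam != 0 by rewrite subr_eq0 gt_eqF // specrad_lt_join.
have := beta_specrad_join.
rewrite coronalE (qform_resolvent_eigenvector (const1_mulmx_colsum colA)); last 2 first.
- by rewrite -lamE gt_eqF // specrad_lt_join.
- exact/specrad_lt_unitmx/specrad_lt_join.
rewrite sqnorm_const_mx expr1n mulr1 -lamE => beta1.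
move/(congr1 (fun z => lamJ * (lamJ - lam) * z)): beta1; rewrite mulr1 => <-; field.
by rewrite gap_nz gt_eqF.
Qed.

End JoinSpectralRadius.

Theorem lemma3p2 (R : realType) (n s : nat) (e : rel 'I_n)
  (hG : simple_graph e) (hn : (1 <= n)%N) (hs : (1 <= s)%N) :
  let lam := specrad (adjmx R e) in
  let lamJ := specrad (adjmx R (join_empty s e)) in
  let beta := fun x : R => s%:R / x * coronal R e x in
  (* (1) beta strictly decreasing on (lam, oo) *)
  (forall x y : R, lam < x -> x < y -> beta y < beta x) /\
  (* (1) lamJ is the unique x > lam with beta x = 1 *)
  (lam < lamJ /\ beta lamJ = 1 /\
   (forall x : R, lam < x -> beta x = 1 -> x = lamJ)) /\
  (* (2) upper bound, with equality for regular G *)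
  lamJ <= (lam + Num.sqrt (lam ^+ 2 + 4%:R * n%:R * s%:R)) / 2%:R /\
  (regular e ->
     lamJ = (lam + Num.sqrt (lam ^+ 2 + 4%:R * n%:R * s%:R)) / 2%:R).
Proof.
move=> lam lamJ beta; have [e_sym _] := hG.
have lam_ge0 : 0 <= lam := specrad_ge0 (tr_adjmx R e_sym) hn.
have lam_lt : lam < lamJ := specrad_lt_join R e_sym hn hs.
have beta1 : beta lamJ = 1 := beta_specrad_join R e_sym hn hs.
have decr x y : lam < x -> x < y -> beta y < beta x.
  exact: beta_decreasing.
split; first exact: decr.
split.
  do 2!split=> //; move=> x lam_x beta_x1.
  case: (ltgtP x lamJ) => // [x_lt | lt_x].
    by have := decr _ _ lam_x x_lt; rewrite beta_x1 beta1 ltxx.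
  by have := decr _ _ lam_lt lt_x; rewrite beta_x1 beta1 ltxx.
rewrite -mulrA; split.
  exact/le_quadratic_root/(specrad_join_bound R e_sym hn hs).
move=> e_reg; apply: eq_quadratic_root; first lra.
exact: specrad_join_regular.
Qed.
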